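(* Let $S$ be a numerical semigroup of multiplicity $m$ and let $(F_\bullet,\partial_\bullet)$ be its Apéry complex. Then: (1) The maps $\partial_d$ are compatible with the substitution convention: for $d\ge2$ and every $B\subseteq[m-1]$ with $|B|=d+1$, writing for $i\in B$ $$D(i,B\setminus i)=\sum_{j\in B\setminus i}\operatorname{sign}(j,B\setminus i)\big(x_j\,e_{i,B\setminus\{i,j\}}-y^{b_{i,j}}e_{i+j,B\setminus\{i,j\}}\big)\in F_{d-1},$$ one has $\sum_{i\in B}\operatorname{sign}(i,B)\,D(i,B\setminus i)=0$; in particular, for $i<\min(A)$, the formula defining $\partial_d(e_{i,A})$ applied formally to the pair $(i,A)$ agrees with $\partial_d$ applied to the linear combination $e_{i,A}=\sum_{j\in A}\operatorname{sign}(j,A)e_{j,(A\cup\{i\})\setminus\{j\}}$. (2) For $d>1$, every nonzero entry of the matrix of $\partial_d$ with respect to the bases $\{e_{i,A}\}$ (with $i\ge\min A$) is of the form $\pm x_k$ for some $k\in[m-1]$ or $\pm y^{b_{k,l}}$ for some $k,l\in[m-1]$; in particular it is $\pm$ a monomial. (3) $\partial_{d-1}\circ\partial_d=0$ for all $d\ge2$, so $F_\bullet$ is a complex.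
   Context: Setup. A numerical semigroup is a submonoid $S\subseteq(\mathbb Z_{\ge0},+)$ containing $0$ with finite complement; its multiplicity is $m=\min(S\setminus\{0\})\ge 2$; its Apéry set is $\{n\in S:n-m\notin S\}=\{0,a_1,\dots,a_{m-1}\}$ with $a_i\equiv i\pmod m$, and $a_0:=m$. Subscripts are read mod $m$ with representatives in $\{0,\dots,m-1\}$. $R=\Bbbk[x_0,\dots,x_{m-1}]$, graded by $\deg x_i=a_i$, with $y=x_0$. For $1\le i,j\le m-1$: $c_{i,j}=\frac1m(a_i+a_j-a_{i+j})$, and $b_{i,j}=c_{i,j}$ if $i+j\not\equiv0$, $b_{i,j}=c_{i,j}+1$ if $i+j\equiv0 \pmod m$. $[m-1]=\{1,\dots,m-1\}$. Apéry complex. $F_0=R$ with basis $e_\varnothing$. For $1\le d\le m-1$, $F_d$ is the free $R$-module with basis $\{e_{i,A}: i\in[m-1],\ A\subseteq[m-1],\ |A|=d,\ i\ge\min(A)\}$, $\deg e_{i,A}=a_i+\sum_{j\in A}a_j$; its rank is $d\binom{m}{d+1}$. For $A=\{\ell_0<\dots<\ell_r\}$ and $j=\ell_t\in A$, $\operatorname{sign}(j,A)=(-1)^t$. Conventions: $e_{0,A}=0$; for $i\in[m-1]$ with $i<\min(A)$, $e_{i,A}:=\sum_{j\in A}\operatorname{sign}(j,A)\,e_{j,(A\cup\{i\})\setminus\{j\}}$; write $e_{i,j}$ for $e_{i,\{j\}}$ (so $e_{i,j}=e_{j,i}$). Differentials: $\partial_1(e_{i,j})=x_ix_j-y^{c_{i,j}}x_{i+j}$,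 and for $d\ge2$, $\partial_d(e_{i,A})=\sum_{j\in A}\operatorname{sign}(j,A)\big(x_je_{i,A\setminus j}-y^{b_{i,j}}e_{i+j,A\setminus j}\big)$, using the conventions above for terms $e_{k,B}$ with $k=0$ or $k<\min B$. *)

From HB Require Import structures.
From mathcomp Require Import all_boot all_order all_algebra.
From mathcomp Require Import mpoly.
Import GRing.Theory.
Local Open Scope ring_scope.

Definition is_numerical_semigroup (S : nat -> bool) : Prop :=
  [/\ S 0%N,
      (forall x y, S x -> S y -> S (x + y)%N)
    & exists N, forall n, (N <= n)%N -> S n].

Definition is_multiplicity (S : nat -> bool) (m : nat) : Prop :=
  [/\ S m, (0 < m)%N & forall n, S n -> (0 < n)%N -> (m <= n)%N].

(** a i (for 1 <= i <= m-1) is the element of the Apery set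
    Ap(S,m) = {n in S : n - m notin S} with a i = i (mod m). *)
Definition is_apery (S : nat -> bool) (m : nat) (a : nat -> nat) : Prop :=
  forall i, (0 < i < m)%N ->
    [/\ S (a i), (a i %% m = i)%N & ~ ((m <= a i)%N /\ S (a i - m)%N)].

Section AperyComplex.
Variable F : fieldType.
Variable m : nat.
Variable a : nat -> nat.

Definition apA (i : nat) : nat := if (i %% m == 0)%N then m else a (i %% m).

Definition cc (i j : nat) : nat := ((apA i + apA j - apA (i + j)) %/ m)%N.
Definition bb (i j : nat) : nat :=
  (cc i j + (if ((i + j) %% m == 0)%N then 1 else 0))%N.

(** The polynomial ring R = F[x_0,...,x_{m-1}] (grading irrelevant here). *)
Definition R := {mpoly F[m]}.

Definition xv (k : nat) : R :=
  if @insub _ (fun n => (n < m)%N) 'I_m (k %% m)%N is Some i then 'X_i else 0.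
Definition yv : R := xv 0.

(** A common ambient free R-module with basis indexed by pairs (i, A),
    i in 'I_m, A a subset of 'I_m; F_d is the span of the e_(i,A)
    with 1 <= i, 0 notin A, |A| = d and i >= min A. *)
Definition idx := ('I_m * {set 'I_m})%type.
Definition vec := {ffun idx -> R}.

Definition ebasis (p : idx) : vec := [ffun q => (q == p)%:R].
Definition vscale (c : R) (v : vec) : vec := [ffun q => c * v q].

Definition sgn (j : 'I_m) (A : {set 'I_m}) : R :=
  (-1) ^+ #|[set l in A | (val l < val j)%N]|.

Definition below (i : nat) (A : {set 'I_m}) : bool :=
  [forall j in A, (i < val j)%N].

Definition valid (d : nat) (p : idx) : bool :=
  [&& (0 < val p.1)%N, #|p.2| == d, [forall j in p.2, (0 < val j)%N]
    & ~~ below (val p.1) p.2].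

Definition inF (d : nat) (v : vec) : Prop := forall p, v p != 0 -> valid d p.

Definition eb (i : nat) (A : {set 'I_m}) : vec :=
  if @insub _ (fun n => (n < m)%N) 'I_m (i %% m)%N is Some io then
    if (i %% m == 0)%N then 0
    else if below (i %% m)%N A then
      \sum_(j in A) vscale (sgn j A) (ebasis (j, (io |: A) :\ j))
    else ebasis (io, A)
  else 0.

(** The formula defining partial_d(e_(i,A)), applied formally to (i, A). *)
Definition dform (i : 'I_m) (A : {set 'I_m}) : vec :=
  \sum_(j in A) vscale (sgn j A)
     (vscale (xv j) (eb i (A :\ j)) - vscale (yv ^+ bb i j) (eb (i + j) (A :\ j))).

Definition dd (d : nat) (v : vec) : vec :=
  \sum_(p | valid d p) vscale (v p) (dform p.1 p.2).

Definition d1 (v : vec) : R :=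
  \sum_(p | valid 1 p) v p *
    \sum_(j in p.2) (xv p.1 * xv j - yv ^+ cc p.1 j * xv (p.1 + j)).

End AperyComplex.

From Pilot Require Import Defs.
From HB Require Import structures.
From mathcomp Require Import all_boot all_order all_algebra.
From mathcomp Require Import mpoly.
From mathcomp Require Import ring zify.
Import GRing.Theory.

(* The differentials are alternating sums over the elements of A, so the
   compatibility with the substitution convention and [d o d = 0] both reduce
   to double sums over pairs [j <> k] whose summands are antisymmetric.  The
   monomial coefficients are symmetric because the Apéry set satisfies
   [a_i + a_j = m c_(i,j) + a_(i+j)]: the Apéry element of a residue is the
   least element of S in it.  The substitution convention is consistent since
   [sum_(j in A) sign(j,A) e_(j, A\j) = 0]: only the term of [min A] is
   rewritten, into minus all the others.  Each coordinate of [d(e_(i,A))]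
   receives at most one term, as the index multisets [{i} + A\j] and
   [{i+j} + A\j] are pairwise distinct. *)

Section AperySet.
Variables (S : nat -> bool) (m : nat) (a : nat -> nat).
Hypotheses (hS : is_numerical_semigroup S) (hm : is_multiplicity S m).
Hypothesis ha : is_apery S m a.

Local Notation apA := (apA m a).
Local Notation cc := (cc m a).

Lemma multiplicity_gt0 : 0 < m. Proof. by case: hm. Qed.

Lemma mem_addS x y : S x -> S y -> S (x + y).
Proof. by case: hS => _ + _; apply. Qed.

Lemma mem_addS_mulm t n : S n -> S (n + t * m).
Proof.
have Sm : S m by case: hm.
elim: t => [|t IH] Sn; first by rewrite addn0.
by rewrite mulSnr addnA mem_addS ?IH.
Qed.

Lemma apery_min r n : 0 < r < m -> S n -> n %% m = r -> a r <= n.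
Proof.
move=> hr Sn nm; have [Sa am anot] := ha _ hr.
rewrite leqNgt; apply/negP => lt.
have /dvdnP[t ht] : m %| a r - n by rewrite -eqn_mod_dvd ?(ltnW lt) // am nm.
have t_gt0 : 0 < t by case: t ht => [|//]; lia.
apply: anot; split; first by move: (leq_pmull m t_gt0); lia.
have -> : a r - m = n + t.-1 * m by move: ht; rewrite -(prednK t_gt0) mulSn; lia.
exact: mem_addS_mulm.
Qed.

Lemma apA_mod0 x : x %% m = 0 -> apA x = m.
Proof. by rewrite /Defs.apA => ->. Qed.

Lemma apA_modN0 {x} : x %% m != 0 ->
  [/\ S (apA x), apA x %% m = x %% m & 0 < apA x].
Proof.
move=> nz; rewrite /Defs.apA (negbTE nz).
have hr : 0 < x %% m < m by rewrite lt0n nz ltn_pmod ?multiplicity_gt0.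
have [Sa am _] := ha _ hr.
split=> //; rewrite lt0n; apply: contraNneq nz => a0.
by rewrite -am a0 mod0n.
Qed.

(* The Apéry element of a residue is the least element of S in it, so
   [apA (p + q) <= apA p + apA q] with difference divisible by [m]. *)
Lemma apery_cocycle p q : p %% m != 0 -> q %% m != 0 ->
  cc p q * m + apA (p + q) = apA p + apA q.
Proof.
move=> np nq; have [Su um up] := apA_modN0 np; have [Sv vm vp] := apA_modN0 nq.
have uvm : (apA p + apA q) %% m = (p + q) %% m by rewrite -modnDm um vm modnDm.
suff [le dv] : apA (p + q) <= apA p + apA q /\ m %| apA p + apA q - apA (p + q).
  by rewrite /Defs.cc divnK // subnK.
have [z|z] := eqVneq ((p + q) %% m) 0.
  rewrite apA_mod0 //; have dm : m %| apA p + apA q by rewrite /dvdn uvm z.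
  by rewrite dvdn_sub // dvdn_leq ?addn_gt0 ?up.
have [Sw wm _] := apA_modN0 z.
have le : apA (p + q) <= apA p + apA q.
  rewrite {1}/Defs.apA (negbTE z) apery_min ?mem_addS //.
  by rewrite lt0n z ltn_pmod ?multiplicity_gt0.
by rewrite -eqn_mod_dvd // uvm wm.
Qed.

End AperySet.

Section Exponents.
Variables (m : nat) (a : nat -> nat).
Hypothesis m_gt0 : 0 < m.
Hypothesis cocycle : forall p q, p %% m != 0 -> q %% m != 0 ->
  cc m a p q * m + apA m a (p + q) = apA m a p + apA m a q.

Local Notation apA := (apA m a).
Local Notation cc := (cc m a).
Local Notation bb := (bb m a).

Lemma eq_apA {x y} : x %% m = y %% m -> apA x = apA y.
Proof. by rewrite /Defs.apA => ->. Qed.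

Lemma ccC p q : cc p q = cc q p.
Proof. by rewrite /Defs.cc addnC (addnC q). Qed.

Lemma bbC p q : bb p q = bb q p.
Proof. by rewrite /Defs.bb ccC (addnC p). Qed.

Lemma eq_cc {x x'} y : x %% m = x' %% m -> cc x y = cc x' y.
Proof.
move=> e; rewrite /Defs.cc (eq_apA e) (@eq_apA (x + y) (x' + y)) //.
by rewrite -modnDml e modnDml.
Qed.

Lemma eq_bb {x x'} y : x %% m = x' %% m -> bb x y = bb x' y.
Proof. by move=> e; rewrite /Defs.bb (eq_cc _ e) -modnDml e modnDml. Qed.

Lemma cc_mod0 p q : p %% m = 0 -> cc p q = 1.
Proof.
move=> z; rewrite /Defs.cc.
have -> : apA (p + q) = apA q by apply: eq_apA; rewrite -modnDml z.
by rewrite {1}/Defs.apA z eqxx addnK divnn m_gt0.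
Qed.

Lemma bb_modN0 p q : (p + q) %% m != 0 -> bb p q = cc p q.
Proof. by rewrite /Defs.bb => /negbTE ->; rewrite addn0. Qed.

Lemma bb_mod0 p q : (p + q) %% m = 0 -> bb p q = (cc p q).+1.
Proof. by rewrite /Defs.bb => ->; rewrite addn1. Qed.

(* The exponent of [y] acquired along [x_i x_j x_k -> x_(i+j) x_k -> x_(i+j+k)];
   unlike [cc i j + cc (i + j) k] it is visibly symmetric in [j] and [k]. *)
Definition cc3 i j k := (apA i + apA j + apA k - apA (i + j + k)) %/ m.

Lemma cc3C i j k : cc3 i j k = cc3 i k j.
Proof. by rewrite /cc3 addnAC (addnAC i). Qed.

Lemma cc3_eq i j k n : n * m + apA (i + j + k) = apA i + apA j + apA k -> cc3 i j k = n.
Proof. by rewrite /cc3 => <-; rewrite addnK mulnK. Qed.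

Lemma cc_cocycle i j k : i %% m != 0 -> j %% m != 0 -> k %% m != 0 ->
  (i + j) %% m != 0 -> cc i j + cc (i + j) k = cc3 i j k.
Proof.
move=> ni nj nk nij; apply/esym/cc3_eq.
by rewrite mulnDl -addnA cocycle // addnA cocycle.
Qed.

Lemma cc3_mod0 i j k : i %% m != 0 -> j %% m != 0 -> (i + j) %% m = 0 ->
  cc3 i j k = (cc i j).+1.
Proof.
move=> ni nj z; apply: cc3_eq.
rewrite (@eq_apA _ k); last by rewrite -modnDml z.
by move: (cocycle _ _ ni nj); rewrite [apA (i + j)]/Defs.apA z eqxx mulSnr => ->.
Qed.

Lemma bb_cocycle i j k : i %% m != 0 -> j %% m != 0 -> k %% m != 0 ->
  (i + j + k) %% m != 0 -> bb i j + bb (i + j) k = cc3 i j k + ((i + j) %% m == 0).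
Proof.
move=> ni nj nk nijk; rewrite [bb (i + j) k]bb_modN0 //.
have [z|nz] := eqVneq ((i + j) %% m) 0.
  by rewrite bb_mod0 // (@cc_mod0 (i + j)) // cc3_mod0 // addn1 addSn.
by rewrite bb_modN0 // cc_cocycle // addn0.
Qed.

End Exponents.

Local Open Scope ring_scope.

Section DistinctPairs.
Variables (n : nat) (B : {set 'I_n}).

Lemma exchange_big_setD1 (V : nmodType) (G : 'I_n -> 'I_n -> V) :
  \sum_(i in B) \sum_(j in B :\ i) G i j = \sum_(j in B) \sum_(i in B :\ j) G i j.
Proof.
rewrite (exchange_big_dep (mem B)) /=; last by move=> i j _; rewrite !inE => /andP[].
apply: eq_bigr => j jB; apply: eq_bigl => i; rewrite !inE.
by rewrite jB andbT eq_sym andbC.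
Qed.

(* Split along [j < i] and [i < j]; the two halves cancel termwise. *)
Lemma sum_setD1_antisym (V : zmodType) (G : 'I_n -> 'I_n -> V) :
  (forall i j, i \in B -> j \in B -> i != j -> G j i = - G i j) ->
  \sum_(i in B) \sum_(j in B :\ i) G i j = 0.
Proof.
move=> antiG.
rewrite (eq_bigr (fun i => \sum_(j in B :\ i | (j < i)%N) G i j +
                          \sum_(j in B :\ i | ~~ (j < i)%N) G i j)); last first.
  by move=> i _; rewrite (bigID (fun j : 'I_n => (j < i)%N)).
rewrite big_split /= [X in _ + X](exchange_big_dep (mem B)) /=; last first.
  by move=> i j _ /andP[]; rewrite !inE => /andP[].
rewrite -[X in _ + X]opprK -sumrN; apply/eqP; rewrite subr_eq0; apply/eqP.
apply: eq_bigr => j jB; rewrite -sumrN; apply: eq_big => [i|i].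
  rewrite !inE jB andbT -leqNgt ltn_neqAle val_eqE (eq_sym j).
  by case: (i \in B); case: (i != j).
by case/andP => /setD1P[ij iB] _; rewrite antiG.
Qed.

End DistinctPairs.

Section AperyComplex.
Variables (F : fieldType) (m : nat) (a : nat -> nat).
Hypothesis m_gt0 : (0 < m)%N.

Local Notation R := (R F m).
Local Notation vec := (vec F m).
Local Notation vscale := (vscale F m).
Local Notation ebasis := (ebasis F m).
Local Notation sgn := (sgn F m).
Local Notation below := (below m).
Local Notation valid := (valid m).
Local Notation eb := (eb F m).
Local Notation xv := (xv F m).
Local Notation yv := (yv F m).
Local Notation cc := (cc m a).
Local Notation bb := (bb m a).
Local Notation dd := (dd F m a).
Local Notation d1 := (d1 F m a).

Lemma vscaleA c c' v : vscale c (vscale c' v) = vscale (c * c') v.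
Proof. by apply/ffunP => q; rewrite !ffunE mulrA. Qed.
Lemma vscale1 v : vscale 1 v = v.
Proof. by apply/ffunP => q; rewrite !ffunE mul1r. Qed.
Lemma vscale0l v : vscale 0 v = 0.
Proof. by apply/ffunP => q; rewrite !ffunE mul0r. Qed.
Lemma vscale0r c : vscale c 0 = 0.
Proof. by apply/ffunP => q; rewrite !ffunE mulr0. Qed.
Lemma vscaleNl c v : vscale (- c) v = - vscale c v.
Proof. by apply/ffunP => q; rewrite !ffunE mulNr. Qed.
Lemma vscaleDl c c' v : vscale (c + c') v = vscale c v + vscale c' v.
Proof. by apply/ffunP => q; rewrite !ffunE mulrDl. Qed.
Lemma vscaleBr c v w : vscale c (v - w) = vscale c v - vscale c w.
Proof. by apply/ffunP => q; rewrite !ffunE mulrBr. Qed.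
Lemma vscale_sumr c I r (P : pred I) (G : I -> vec) :
  vscale c (\sum_(i <- r | P i) G i) = \sum_(i <- r | P i) vscale c (G i).
Proof.
apply/ffunP => q; rewrite ffunE !sum_ffunE mulr_sumr.
by apply: eq_bigr => i _; rewrite ffunE.
Qed.

Lemma sgnE (j : 'I_m) (A : {set 'I_m}) : sgn j A = 1 \/ sgn j A = -1.
Proof.
rewrite /Defs.sgn; elim: #|_| => [|n IH]; first by left.
by rewrite exprS; case: IH => ->; [right; rewrite mulr1 | left; rewrite mulrNN mulr1].
Qed.

Lemma sgn_setD1 {j} k {A : {set 'I_m}} : j \in A -> sgn k A = (-1) ^+ (j < k)%N * sgn k (A :\ j).
Proof.
move=> jA; rewrite /Defs.sgn -exprD (cardsD1 j) inE jA /=; congr (_ ^+ (_ + _)%N).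
by apply: eq_card => l; rewrite !inE andbA.
Qed.

Lemma sgn_setD1_swap {j k : 'I_m} {A : {set 'I_m}} : j \in A -> k \in A -> j != k ->
  sgn j A * sgn k (A :\ j) = - (sgn k A * sgn j (A :\ k)).
Proof.
move=> jA kA jk; rewrite (sgn_setD1 k jA) (sgn_setD1 j kA).
have [lt|lt|/val_inj eq] := ltngtP j k; last by rewrite eq eqxx in jk.
all: by rewrite /= expr1 expr0; ring.
Qed.

Lemma sgn_min (j : 'I_m) (A : {set 'I_m}) : (forall l, l \in A -> (j <= l)%N) -> sgn j A = 1.
Proof.
move=> jmin; rewrite /Defs.sgn (_ : [set _ in A | _] = set0) ?cards0 //.
by apply/setP => l; rewrite !inE; case: (boolP (l \in A)) => // /jmin; rewrite leqNgt => /negbTE.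
Qed.

Lemma setD1C (A : {set 'I_m}) i j : A :\ i :\ j = A :\ j :\ i.
Proof. by apply/setP => x; rewrite !inE andbCA. Qed.

Definition pos_set (A : {set 'I_m}) : bool := [forall j in A, (0 < j)%N].

Lemma pos_setP (A : {set 'I_m}) : reflect (forall j, j \in A -> (0 < j)%N) (pos_set A).
Proof. exact: forall_inP. Qed.

Lemma pos_setD1 (A : {set 'I_m}) j : pos_set A -> pos_set (A :\ j).
Proof. by move=> /pos_setP Apos; apply/pos_setP => l /setD1P[_ /Apos]. Qed.

Lemma pos_mod {j : 'I_m} : (0 < j)%N -> (j %% m != 0)%N.
Proof. by rewrite modn_small // -lt0n. Qed.

Lemma belowP i (A : {set 'I_m}) : reflect (forall j, j \in A -> (i < j)%N) (below i A).
Proof. exact: forall_inP. Qed.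

Lemma notin_below {i : 'I_m} {A : {set 'I_m}} : below i A -> i \notin A.
Proof. by move/belowP=> iA; apply/negP => /iA; rewrite ltnn. Qed.

Lemma below_min (i : 'I_m) {j} {A : {set 'I_m}} : j \in A -> (j <= i)%N -> below i A = false.
Proof. by move=> jA ji; apply/negbTE/belowP => /(_ j jA); rewrite ltnNge ji. Qed.

Definition ord_mod (n : nat) : 'I_m := Ordinal (ltn_pmod n m_gt0).

Lemma eb_mod n (A : {set 'I_m}) : eb n A = eb (ord_mod n) A.
Proof. by rewrite /Defs.eb /= modn_mod. Qed.

Lemma eb_mod0 n (A : {set 'I_m}) : (n %% m = 0)%N -> eb n A = 0.
Proof. by move=> z; rewrite /Defs.eb; case: insubP => // io _ _; rewrite z eqxx. Qed.

Lemma ebE (i : 'I_m) (A : {set 'I_m}) : (0 < i)%N ->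
  eb i A = if below i A then \sum_(j in A) vscale (sgn j A) (ebasis (j, (i |: A) :\ j))
           else ebasis (i, A).
Proof.
move=> i_gt0; rewrite /Defs.eb modn_small //.
case: insubP => [io _ vio|]; last by rewrite ltn_ord.
by rewrite (_ : io = i) ?(negbTE (lt0n_neq0 i_gt0)) //; apply: val_inj.
Qed.

Lemma xv_mod n : xv n = xv (n %% m).
Proof. by rewrite /Defs.xv modn_mod. Qed.

Lemma sum_sgn_eb_setD1 (A : {set 'I_m}) : pos_set A ->
  \sum_(j in A) vscale (sgn j A) (eb j (A :\ j)) = 0.
Proof.
move=> /pos_setP Apos; have [->|[j1 j1A]] := set_0Vmem A; first by rewrite big_set0.
have [j0 j0A j0min] := arg_minnP (fun j : 'I_m => val j) j1A.
have j0_lt l : l \in A :\ j0 -> (j0 < l)%N.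
  by case/setD1P => lj0 lA; rewrite ltn_neqAle j0min // andbT eq_sym.
rewrite (bigD1 j0) //= ebE ?Apos // (_ : below j0 _); last exact/belowP.
rewrite setD1K // sgn_min ?vscale1; last exact: j0min.
rewrite -[X in X + _]opprK -sumrN; apply/eqP; rewrite addrC subr_eq0; apply/eqP.
rewrite (eq_bigl (mem (A :\ j0))) => [|l]; last by rewrite !inE andbC.
apply: eq_bigr => l lA; have [lj0 l_A] := setD1P lA.
rewrite (sgn_setD1 l j0A) j0_lt // expr1 mulN1r vscaleNl.
have j0l : j0 \in A :\ l by rewrite !inE eq_sym lj0.
by rewrite ebE ?Apos // (below_min l j0l) ?j0min.
Qed.

Definition dformn (i : nat) (A : {set 'I_m}) : vec :=
  \sum_(j in A) vscale (sgn j A)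
     (vscale (xv j) (eb i (A :\ j)) - vscale (yv ^+ bb i j) (eb (i + j) (A :\ j))).

Lemma sum_sgn_dformn_setD1 {B : {set 'I_m}} : pos_set B ->
  \sum_(i in B) vscale (sgn i B) (dformn i (B :\ i)) = 0.
Proof.
move=> Bpos.
rewrite (eq_bigr (fun i =>
   \sum_(j in B :\ i) vscale (sgn i B * sgn j (B :\ i) * xv j) (eb i (B :\ i :\ j)) -
   \sum_(j in B :\ i) vscale (sgn i B * sgn j (B :\ i) * yv ^+ bb i j)
                             (eb (i + j) (B :\ i :\ j)))); last first.
  move=> i _; rewrite vscale_sumr -sumrB; apply: eq_bigr => j _.
  by rewrite !vscaleA vscaleBr !vscaleA.
rewrite sumrB [X in _ - X]sum_setD1_antisym ?subr0; last first.
  move=> i j iB jB ij; rewrite bbC addnC setD1C -vscaleNl.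
  by rewrite (sgn_setD1_swap jB iB) 1?eq_sym //; congr vscale; ring.
rewrite exchange_big_setD1 big1 // => j jB.
rewrite (eq_bigr (fun i => vscale (- sgn j B * xv j)
                             (vscale (sgn i (B :\ j)) (eb i (B :\ j :\ i))))); last first.
  move=> i /setD1P[ij iB]; rewrite vscaleA setD1C (sgn_setD1_swap iB jB ij).
  by congr vscale; ring.
by rewrite -vscale_sumr sum_sgn_eb_setD1 ?vscale0r ?pos_setD1.
Qed.

Lemma ddD d v w : dd d (v + w) = dd d v + dd d w.
Proof.
by rewrite /Defs.dd -big_split; apply: eq_bigr => p _; rewrite ffunE vscaleDl.
Qed.
Lemma dd0 d : dd d 0 = 0.
Proof. by rewrite /Defs.dd big1 // => p _; rewrite ffunE vscale0l. Qed.
Lemma ddN d v : dd d (- v) = - dd d v.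
Proof. by rewrite /Defs.dd -sumrN; apply: eq_bigr => p _; rewrite ffunE vscaleNl. Qed.
Lemma ddB d v w : dd d (v - w) = dd d v - dd d w.
Proof. by rewrite ddD ddN. Qed.
Lemma ddZ d c v : dd d (vscale c v) = vscale c (dd d v).
Proof.
by rewrite /Defs.dd vscale_sumr; apply: eq_bigr => p _; rewrite ffunE vscaleA.
Qed.
Lemma dd_sum d I r (P : pred I) (G : I -> vec) :
  dd d (\sum_(i <- r | P i) G i) = \sum_(i <- r | P i) dd d (G i).
Proof. exact: (big_morph _ (ddD d) (dd0 d)). Qed.

Lemma dd_ebasis d p : valid d p -> dd d (ebasis p) = dformn p.1 p.2.
Proof.
move=> vp; rewrite /Defs.dd (bigD1 p) //= ffunE eqxx vscale1 big1 ?addr0 //.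
by move=> q /andP[_ qp]; rewrite ffunE (negbTE qp) vscale0l.
Qed.

Lemma dformn_mod n B : dformn n B = dformn (ord_mod n) B.
Proof.
apply: eq_bigr => j _; rewrite (eq_bb m a j (esym (modn_mod n m))) /=.
rewrite eb_mod [eb (_ %% m) _]eb_mod [eb (n + j) _]eb_mod [eb (_ %% m + j) _]eb_mod /=.
by rewrite modnDml modn_mod.
Qed.

(* Since [e_(0,_) = 0] and [b_(0,j) = 1], [dformn 0 B] is [- y] times the
   vanishing alternating sum. *)
Lemma dformn_mod0 n B : (n %% m = 0)%N -> pos_set B -> dformn n B = 0.
Proof.
move=> z Bpos; rewrite /dformn (eq_bigr (fun j => - vscale yv (vscale (sgn j B) (eb j (B :\ j))))).
  by rewrite sumrN -vscale_sumr sum_sgn_eb_setD1 // vscale0r oppr0.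
move=> j jB; have jmod : ((n + j) %% m = j %% m)%N by rewrite -modnDml z.
have j_gt0 : (0 < j)%N by move/pos_setP: Bpos; apply.
rewrite eb_mod0 // vscale0r sub0r /Defs.bb jmod (negbTE (pos_mod j_gt0)).
rewrite cc_mod0 // eb_mod [eb j _]eb_mod /= jmod.
by apply/ffunP => q; rewrite !ffunE addn0 expr1; ring.
Qed.

Lemma valid_setU1D1 (i l : 'I_m) B : (0 < i)%N -> pos_set B -> below i B -> l \in B ->
  valid #|B| (l, (i |: B) :\ l).
Proof.
move=> i_gt0 /pos_setP Bpos iB lB; have iNB := notin_below iB.
have il : i != l by apply: contraNneq iNB => ->.
apply/and4P; split => /=.
- exact: Bpos.
- have := cardsD1 l (i |: B); rewrite in_setU1 lB orbT cardsU1 iNB.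
  by move=> /eqP; rewrite eqn_add2l eq_sym.
- by apply/pos_setP => t; rewrite !inE => /andP[_ /predU1P[->|/Bpos]].
- have il_lt : (i < l)%N by move/belowP: iB; apply.
  by apply/negP => /belowP /(_ i); rewrite !inE eqxx il => /(_ isT); rewrite ltnNge ltnW.
Qed.

(* The alternating identity on [i |: B] expresses the formal [dformn i B]
   through the [dformn] of genuine basis elements. *)
Lemma dformn_below (i : 'I_m) B : (0 < i)%N -> pos_set B -> below i B ->
  dformn i B = \sum_(l in B) vscale (sgn l B) (dformn l ((i |: B) :\ l)).
Proof.
move=> i_gt0 Bpos iB; have iNB := notin_below iB.
have iBpos : pos_set (i |: B).
  by apply/pos_setP => t /setU1P[-> //|]; move/pos_setP: Bpos; apply.
move: (sum_sgn_dformn_setD1 iBpos); rewrite (bigD1 i) ?setU11 //= setU1K //.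
rewrite sgn_min ?vscale1 => [|l /setU1P[->//|/(belowP _ _ iB)/ltnW//]].
rewrite (eq_bigl (fun l => l \in B)) => [|l]; last first.
  by rewrite !inE; case: (eqVneq l i) => [->|_]; rewrite ?(negbTE iNB) ?andbT.
move/eqP; rewrite addr_eq0 => /eqP ->; rewrite -sumrN; apply: eq_bigr => l lB.
have il : (i < l)%N by move/belowP: iB; apply.
by rewrite (sgn_setD1 l (setU11 i B)) setU1K // il expr1 mulN1r vscaleNl opprK.
Qed.

Lemma dd_eb n B : pos_set B -> dd #|B| (eb n B) = dformn n B.
Proof.
move=> Bpos; have [z|nz] := eqVneq (n %% m)%N 0%N.
  by rewrite eb_mod0 // dd0 dformn_mod0.
rewrite eb_mod dformn_mod; set i := ord_mod n; have i_gt0 : (0 < i)%N by rewrite lt0n.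
rewrite ebE //; case: ifP => iB; last first.
  by rewrite dd_ebasis //; apply/and4P; rewrite iB eqxx.
rewrite dformn_below // dd_sum; apply: eq_bigr => l lB.
by rewrite ddZ dd_ebasis ?valid_setU1D1.
Qed.

Lemma signed_mul (c : R) {s e : R} : (s = 1 \/ s = -1) -> (e = 1 \/ e = -1) ->
  s * (c * e) = c \/ s * (c * e) = - c.
Proof.
by move=> [] -> [] ->; rewrite ?mulr1 ?mulrN1 ?mul1r ?mulN1r ?opprK; [left|right|right|left].
Qed.

(* [mcount n B t] is the multiplicity of [t] in the multiset [{n mod m} + B];
   every basis vector occurring in [eb n B] has the same multiset. *)
Definition mcount (n : nat) (B : {set 'I_m}) (t : 'I_m) : nat :=
  ((t \in B) + (val t == n %% m))%N.

Lemma eb_entry {n B q} : eb n B q != 0 ->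
  (eb n B q = 1 \/ eb n B q = -1) /\ mcount q.1 q.2 =1 mcount n B.
Proof.
have [z|nz] := eqVneq (n %% m)%N 0%N; first by rewrite eb_mod0 // ffunE eqxx.
rewrite eb_mod; rewrite /mcount -[(n %% m)%N]/(val (ord_mod n)); set i := ord_mod n.
rewrite ebE ?lt0n //; case: ifP => iB; last first.
  rewrite ffunE; case: (eqVneq q (i, B)) => [-> _|_]; last by rewrite /= mulr0n eqxx.
  split; first by left.
  by move=> t /=; rewrite modn_mod.
have iNB := notin_below iB; rewrite sum_ffunE.
case: (pickP (fun l => (l \in B) && (q == (l, (i |: B) :\ l)))) => [l /andP[lB /eqP ql]|qN].
  rewrite (bigD1 l) //= big1 ?addr0 => [|l' /andP[_ l'l]]; last first.
    by rewrite !ffunE ql xpair_eqE eq_sym (negbTE l'l) mulr0.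
  rewrite !ffunE ql eqxx mulr1 => _; split; first exact: sgnE.
  have il : i != l by apply: contraNneq iNB => ->.
  move=> t /=; rewrite modn_small // -[(n %% m)%N]/(val i) !val_eqE !inE.
  case: (eqVneq t l) => [->|_] /=; first by rewrite lB eq_sym (negbTE il).
  by case: (eqVneq t i) => [->|_] /=; rewrite ?(negbTE iNB) ?addn0.
by rewrite big1 ?eqxx // => l lB; rewrite !ffunE; move: (qN l); rewrite lB /= => ->; rewrite mulr0.
Qed.

Lemma modn_addl_neq {i : 'I_m} (j : 'I_m) : (0 < i)%N -> (val j != (i + j) %% m)%N.
Proof.
move=> i_gt0; rewrite eq_sym; have [lt|ge] := ltnP (i + j) m.
  by rewrite modn_small // -{1}[val j]add0n eqn_add2r -lt0n.
rewrite -(subnK ge) modnDr modn_small; last by have := ltn_ord i; have := ltn_ord j; lia.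
by rewrite neq_ltn ltn_subLR // ltn_add2r ltn_ord.
Qed.

Lemma mcount_setD1_inj {i} {A : {set 'I_m}} {j j' : 'I_m} : j \in A ->
  mcount i (A :\ j) =1 mcount i (A :\ j') -> j = j'.
Proof.
move=> jA /(_ j) /eqP; rewrite /mcount eqn_add2r !inE eqxx jA andbT.
by case: (eqVneq j j').
Qed.

Lemma mcount_setD1_addl {i j j' : 'I_m} {A : {set 'I_m}} : (0 < i)%N -> (0 < j)%N ->
  j' \in A -> ~ mcount i (A :\ j) =1 mcount (i + j') (A :\ j').
Proof.
move=> i_gt0 j_gt0 j'A; case: (eqVneq j' j) => [->|jj'] eq_ij.
  move: (eq_ij (ord_mod (i + j))); rewrite /mcount /= eqxx (modn_small (ltn_ord i)).
  by rewrite eq_sym (addnC i) (negbTE (modn_addl_neq i j_gt0)) => /eqP; rewrite eqn_add2l.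
by move: (eq_ij j'); rewrite /mcount !inE eqxx j'A jj' (negbTE (modn_addl_neq j' i_gt0)).
Qed.

Lemma mcount_setD1_addl_inj {i j j' : 'I_m} {A : {set 'I_m}} : (0 < i)%N ->
  j' \in A -> mcount (i + j) (A :\ j) =1 mcount (i + j') (A :\ j') -> j = j'.
Proof.
move=> i_gt0 j'A /(_ j'); rewrite /mcount !inE eqxx j'A (negbTE (modn_addl_neq j' i_gt0)).
by case: (eqVneq j' j).
Qed.

Lemma dformn_entry (i : 'I_m) A q : (0 < i)%N -> pos_set A -> dformn i A q != 0 ->
  (exists2 j, j \in A & dformn i A q = xv j \/ dformn i A q = - xv j) \/
  (exists2 j, j \in A & dformn i A q = yv ^+ bb i j \/ dformn i A q = - yv ^+ bb i j).
Proof.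
move=> i_gt0 /pos_setP Apos.
pose e1 (j : 'I_m) := eb i (A :\ j) q; pose e2 (j : 'I_m) := eb (i + j) (A :\ j) q.
have -> : dformn i A q = \sum_(j in A) sgn j A * (xv j * e1 j - yv ^+ bb i j * e2 j).
  by rewrite sum_ffunE; apply: eq_bigr => j _; rewrite !ffunE.
have e1_uniq j j' : j \in A -> e1 j != 0 -> e1 j' != 0 -> j = j'.
  move=> jA /eb_entry[_ c] /eb_entry[_ c'].
  exact: mcount_setD1_inj jA (ftrans (fsym c) c').
have e12 j j' : j \in A -> j' \in A -> e1 j != 0 -> e2 j' != 0 -> False.
  move=> jA j'A /eb_entry[_ c] /eb_entry[_ c'].
  exact: mcount_setD1_addl i_gt0 (Apos j jA) j'A (ftrans (fsym c) c').
have e2_uniq j j' : j' \in A -> e2 j != 0 -> e2 j' != 0 -> j = j'.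
  move=> j'A /eb_entry[_ c] /eb_entry[_ c'].
  exact: mcount_setD1_addl_inj i_gt0 j'A (ftrans (fsym c) c').
case: (pickP (fun j => (j \in A) && (e1 j != 0))) => [j0 /andP[j0A e10] | no1].
  have e2_0 j : j \in A -> e2 j = 0 by move=> jA; apply/eqP/contraT => /(e12 _ _ j0A jA e10).
  rewrite (big_only1 _ j0A) => [|j jj0 jA]; last first.
    rewrite e2_0 // (_ : e1 j = 0) ?mulr0 ?subrr ?mulr0 //.
    by apply/eqP/contraT => /(e1_uniq _ _ jA)/(_ e10) ej; rewrite ej eqxx in jj0.
  rewrite e2_0 // mulr0 subr0 => _; left; exists j0 => //.
  exact: signed_mul _ (sgnE j0 A) (proj1 (eb_entry e10)).
have e1_0 j : j \in A -> e1 j = 0 by move=> jA; move: (no1 j); rewrite jA => /negbFE/eqP.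
case: (pickP (fun j => (j \in A) && (e2 j != 0))) => [j0 /andP[j0A e20] | no2]; last first.
  rewrite big1 ?eqxx // => j jA; move: (no2 j); rewrite jA => /negbFE/eqP->.
  by rewrite e1_0 // !mulr0 subrr mulr0.
rewrite (big_only1 _ j0A) => [|j jj0 jA]; last first.
  rewrite e1_0 // (_ : e2 j = 0) ?mulr0 ?subrr ?mulr0 //.
  by apply/eqP/contraT => /(e2_uniq _ _ j0A)/(_ e20) ej; rewrite ej eqxx in jj0.
rewrite e1_0 // mulr0 sub0r => _; right; exists j0 => //.
rewrite mulrN; case: (signed_mul (yv ^+ bb i j0) (sgnE j0 A) (proj1 (eb_entry e20))) => ->.
  by right.
by left; rewrite opprK.
Qed.

Section Square.
Hypothesis cocycle : forall p q, (p %% m != 0)%N -> (q %% m != 0)%N ->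
  (cc p q * m + apA m a (p + q) = apA m a p + apA m a q)%N.

Local Notation cc3 := (cc3 m a).

Lemma eb_bb_bb (i j k : 'I_m) B : (0 < i)%N -> (0 < j)%N -> (0 < k)%N ->
  vscale (yv ^+ bb i j * yv ^+ bb (i + j) k) (eb (i + j + k) B) =
  vscale (yv ^+ ((i + j) %% m == 0)%N) (vscale (yv ^+ cc3 i j k) (eb (i + j + k) B)).
Proof.
move=> i_gt0 j_gt0 k_gt0; have [z|nz] := eqVneq ((i + j + k) %% m)%N 0%N.
  by rewrite eb_mod0 // !vscale0r.
by rewrite vscaleA -!exprD bb_cocycle ?pos_mod // addnC.
Qed.

(* For [i + j = 0 (mod m)] the terms reduce to [e_(k, A\j\k)], whose
   alternating sum vanishes. *)
Lemma sum_eb_cc3_mod0 {i j : 'I_m} {A} : (0 < i)%N -> (0 < j)%N -> pos_set A ->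
  ((i + j) %% m = 0)%N ->
  \sum_(k in A :\ j) vscale (sgn j A * sgn k (A :\ j))
                       (vscale (yv ^+ cc3 i j k) (eb (i + j + k) (A :\ j :\ k))) = 0.
Proof.
move=> i_gt0 j_gt0 Apos z.
rewrite (eq_bigr (fun k => vscale (sgn j A * yv ^+ (cc i j).+1)
                             (vscale (sgn k (A :\ j)) (eb k (A :\ j :\ k))))).
  by rewrite -vscale_sumr sum_sgn_eb_setD1 ?vscale0r ?pos_setD1.
move=> k _; rewrite cc3_mod0 ?pos_mod // !vscaleA eb_mod [eb k _]eb_mod /=.
rewrite (_ : (i + j + k) %% m = k %% m)%N; last by rewrite -modnDml z.
by congr vscale; ring.
Qed.

Lemma sum_eb_bb_bb (i : 'I_m) A : (0 < i)%N -> pos_set A ->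
  \sum_(j in A) \sum_(k in A :\ j)
    vscale (sgn j A * sgn k (A :\ j) * (yv ^+ bb i j * yv ^+ bb (i + j) k))
           (eb (i + j + k) (A :\ j :\ k)) = 0.
Proof.
move=> i_gt0 /[dup] Apos /pos_setP Agt0.
pose t (j k : 'I_m) := vscale (sgn j A * sgn k (A :\ j))
                         (vscale (yv ^+ cc3 i j k) (eb (i + j + k) (A :\ j :\ k))).
rewrite -[RHS](@sum_setD1_antisym _ A _ t); last first.
  move=> j k jA kA jk; rewrite /t (sgn_setD1_swap jA kA jk) vscaleNl.
  by rewrite cc3C (addnAC i k) setD1C opprK.
apply: eq_bigr => j jA; have [z|nz] := eqVneq ((i + j) %% m)%N 0%N.
  have t0 : \sum_(k in A :\ j) t j k = 0 := sum_eb_cc3_mod0 i_gt0 (Agt0 _ jA) Apos z.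
  rewrite t0; transitivity (vscale yv (\sum_(k in A :\ j) t j k)); last by rewrite t0 vscale0r.
  rewrite vscale_sumr; apply: eq_bigr => k /setD1P[_ /Agt0 k_gt0].
  rewrite -vscaleA (eb_bb_bb _ _ _ _ i_gt0 (Agt0 _ jA) k_gt0) z eqxx /t !vscaleA.
  by congr vscale; ring.
apply: eq_bigr => k /setD1P[_ /Agt0 k_gt0].
by rewrite -vscaleA (eb_bb_bb _ _ _ _ i_gt0 (Agt0 _ jA) k_gt0) (negbTE nz) expr0 vscale1.
Qed.

(* [d o d] of a basis element expands into four double sums over [j <> k]:
   the [x x], [x y] and [y x] ones are antisymmetric, the [y y] one is
   [sum_eb_bb_bb]. *)
Lemma sum_sgn_dformn_dformn {i : 'I_m} {A} : (0 < i)%N -> pos_set A ->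
  \sum_(j in A) vscale (sgn j A)
     (vscale (xv j) (dformn i (A :\ j)) - vscale (yv ^+ bb i j) (dformn (i + j) (A :\ j))) = 0.
Proof.
move=> i_gt0 Apos.
pose s (j k : 'I_m) := sgn j A * sgn k (A :\ j).
pose T1 (j k : 'I_m) := vscale (s j k * (xv j * xv k)) (eb i (A :\ j :\ k)).
pose T23 (j k : 'I_m) := vscale (s j k * (xv j * yv ^+ bb i k)) (eb (i + k) (A :\ j :\ k)) +
                         vscale (s j k * (yv ^+ bb i j * xv k)) (eb (i + j) (A :\ j :\ k)).
pose T4 (j k : 'I_m) := vscale (s j k * (yv ^+ bb i j * yv ^+ bb (i + j) k))
                          (eb (i + j + k) (A :\ j :\ k)).
rewrite (eq_bigr (fun j => \sum_(k in A :\ j) T1 j k - \sum_(k in A :\ j) T23 j k +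
                           \sum_(k in A :\ j) T4 j k)); last first.
  move=> j _; rewrite -sumrB -big_split /= /dformn.
  apply/ffunP => q; rewrite !(ffunE, sum_ffunE) !mulr_sumr -sumrB mulr_sumr.
  by apply: eq_bigr => k _; rewrite !(ffunE, sum_ffunE) /T1 /T23 /T4 /s; ring.
rewrite big_split sumrB /= sum_eb_bb_bb // addr0.
rewrite sum_setD1_antisym => [|j k jA kA jk]; last first.
  rewrite /T1 /s (sgn_setD1_swap jA kA jk) setD1C -vscaleNl.
  by congr vscale; ring.
rewrite sum_setD1_antisym ?subrr // => j k jA kA jk.
rewrite /T23 /s (sgn_setD1_swap jA kA jk) setD1C addrC opprD -!vscaleNl.
by congr (_ + _); congr vscale; ring.
Qed.

Lemma dd_dformn d (i : 'I_m) A : (0 < i)%N -> pos_set A -> #|A| = d.+1 ->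
  dd d (dformn i A) = 0.
Proof.
move=> i_gt0 Apos cardA; rewrite -[RHS](sum_sgn_dformn_dformn i_gt0 Apos) dd_sum.
apply: eq_bigr => j jA; have cardAj : #|A :\ j| = d by move: cardA; rewrite (cardsD1 j) jA => -[].
by rewrite ddZ ddB !ddZ -cardAj !dd_eb ?pos_setD1.
Qed.

Lemma dd_comp d v : dd d (dd d.+1 v) = 0.
Proof.
rewrite {2}/Defs.dd dd_sum big1 // => -[i A] /and4P[/= i_gt0 /eqP cardA Apos _].
by rewrite ddZ dd_dformn // vscale0r.
Qed.

Lemma d1D v w : d1 (v + w) = d1 v + d1 w.
Proof. by rewrite /Defs.d1 -big_split; apply: eq_bigr => p _; rewrite ffunE mulrDl. Qed.
Lemma d10 : d1 0 = 0.
Proof. by rewrite /Defs.d1 big1 // => p _; rewrite ffunE mul0r. Qed.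
Lemma d1B v w : d1 (v - w) = d1 v - d1 w.
Proof.
rewrite d1D; congr (_ + _); rewrite /Defs.d1 -sumrN.
by apply: eq_bigr => p _; rewrite ffunE mulNr.
Qed.
Lemma d1Z c v : d1 (vscale c v) = c * d1 v.
Proof. by rewrite /Defs.d1 mulr_sumr; apply: eq_bigr => p _; rewrite ffunE mulrA. Qed.
Lemma d1_sum I r (P : pred I) (G : I -> vec) :
  d1 (\sum_(i <- r | P i) G i) = \sum_(i <- r | P i) d1 (G i).
Proof. exact: (big_morph _ d1D d10). Qed.

Definition apery_binomial (n k : nat) : R := xv n * xv k - yv ^+ cc n k * xv (n + k).

Lemma apery_binomialC n k : apery_binomial n k = apery_binomial k n.
Proof. by rewrite /apery_binomial mulrC ccC addnC. Qed.

Lemma d1_ebasis i k : valid 1 (i, [set k]) -> d1 (ebasis (i, [set k])) = apery_binomial i k.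
Proof.
move=> vp; rewrite /Defs.d1 (bigD1 (i, [set k])) //= ffunE eqxx mul1r big_set1.
by rewrite big1 ?addr0 // => q /andP[_ qp]; rewrite ffunE (negbTE qp) mul0r.
Qed.

Lemma d1_eb n (k : 'I_m) : (0 < k)%N -> d1 (eb n [set k]) = apery_binomial n k.
Proof.
move=> k_gt0; have [z|nz] := eqVneq (n %% m)%N 0%N.
  rewrite eb_mod0 // d10 /apery_binomial xv_mod z cc_mod0 // expr1.
  by rewrite [xv (n + k)]xv_mod -modnDml z -xv_mod subrr.
have -> : apery_binomial n k = apery_binomial (ord_mod n) k.
  rewrite /apery_binomial /= (eq_cc m a k (esym (modn_mod n m))) [xv n]xv_mod.
  by rewrite [xv (n + k)]xv_mod [xv (n %% m + k)]xv_mod modnDml.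
rewrite eb_mod; set i := ord_mod n; have i_gt0 : (0 < i)%N by rewrite lt0n.
have valid1 (l l' : 'I_m) : (0 < l)%N -> (0 < l')%N -> (l' <= l)%N -> valid 1 (l, [set l']).
  move=> l_gt0 l'_gt0 l'l; rewrite /Defs.valid cards1 l_gt0 (below_min l (set11 l')) //.
  by rewrite andbT; apply/forall_inP => t /set1P->.
rewrite ebE //; case: ifP => ik; last first.
  by rewrite d1_ebasis // valid1 // leqNgt; apply: contraFN ik => ?; apply/belowP => t /set1P->.
have ik_lt : (i < k)%N by move/belowP: ik; apply; rewrite set11.
rewrite big_set1 sgn_min ?vscale1 => [|l /set1P-> //].
rewrite (_ : (i |: [set k]) :\ k = [set i]).
  by rewrite d1_ebasis ?valid1 ?(ltnW ik_lt) // apery_binomialC.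
apply/setP => t; rewrite !inE; case: (eqVneq t k) => [->|] //=; last by rewrite orbF.
by apply/esym/negbTE; rewrite -val_eqE neq_ltn ik_lt orbT.
Qed.

(* The coefficient of [sgn j A * sgn k (A :\ j)] in [d1 (dformn i A)] for
   [A = {j, k}]. *)
Definition binomial_syzygy (i j k : 'I_m) : R :=
  xv j * apery_binomial i k - yv ^+ bb i j * apery_binomial (i + j) k.

Lemma binomial_syzygy_mod0 (i j k : 'I_m) : (0 < i)%N -> (0 < j)%N -> (0 < k)%N ->
  j != k -> ((i + j) %% m = 0)%N -> binomial_syzygy i j k = binomial_syzygy i k j.
Proof.
move=> i_gt0 j_gt0 k_gt0 jk z.
have nik : ((i + k) %% m != 0)%N.
  apply: contra jk => /eqP zk; rewrite -val_eqE.
  have : ((i + j) %% m == (i + k) %% m)%N by rewrite z zk.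
  by rewrite eqn_modDl !modn_small.
have xk n : (n %% m = k %% m)%N -> xv n = xv k by move=> e; rewrite xv_mod e -xv_mod.
rewrite /binomial_syzygy /apery_binomial bb_mod0 // bb_modN0 //.
have -> : xv (i + j + k)%N = xv k by apply: xk; rewrite -modnDml z.
have -> : xv (i + k + j)%N = xv k by rewrite addnAC; apply: xk; rewrite -modnDml z.
rewrite [xv (i + j)]xv_mod z -/yv (@cc_mod0 m a m_gt0 (i + j) k z).
have E : yv ^+ cc i k * yv ^+ cc (i + k) j = yv ^+ cc i j * yv.
  by rewrite -exprD cc_cocycle ?pos_mod // cc3C cc3_mod0 ?pos_mod // exprSr.
apply/eqP; rewrite -subr_eq0; apply/eqP.
transitivity (xv k * (yv ^+ cc i j * yv - yv ^+ cc i k * yv ^+ cc (i + k) j)); first ring.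
by rewrite E subrr mulr0.
Qed.

Lemma binomial_syzygyC {i j k : 'I_m} : (0 < i)%N -> (0 < j)%N -> (0 < k)%N -> j != k ->
  binomial_syzygy i j k = binomial_syzygy i k j.
Proof.
move=> i_gt0 j_gt0 k_gt0 jk.
have [zj|nj] := eqVneq ((i + j) %% m)%N 0%N; first exact: binomial_syzygy_mod0.
have [zk|nk] := eqVneq ((i + k) %% m)%N 0%N.
  by apply/esym/binomial_syzygy_mod0; rewrite // eq_sym.
rewrite /binomial_syzygy /apery_binomial !bb_modN0 // (addnAC i k j).
have E : yv ^+ cc i j * yv ^+ cc (i + j) k = yv ^+ cc i k * yv ^+ cc (i + k) j.
  by rewrite -!exprD !cc_cocycle ?pos_mod // cc3C.
apply/eqP; rewrite -subr_eq0; apply/eqP.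
transitivity (xv (i + j + k) *
  (yv ^+ cc i j * yv ^+ cc (i + j) k - yv ^+ cc i k * yv ^+ cc (i + k) j)); first ring.
by rewrite E subrr mulr0.
Qed.

Lemma d1_dd2 v : d1 (dd 2 v) = 0.
Proof.
rewrite /Defs.dd d1_sum big1 // => -[i A] /and4P[/= i_gt0 /eqP cardA /[dup] Apos /pos_setP Agt0 _].
rewrite d1Z d1_sum -[RHS](mulr0 (v (i, A))); congr (_ * _).
rewrite (eq_bigr (fun j => \sum_(k in A :\ j) sgn j A * sgn k (A :\ j) * binomial_syzygy i j k)).
  rewrite sum_setD1_antisym // => j k jA kA jk.
  rewrite (sgn_setD1_swap jA kA jk) mulNr opprK.
  by rewrite (binomial_syzygyC i_gt0 (Agt0 _ jA) (Agt0 _ kA) jk).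
move=> j jA; have /cards1P[k Aj] : #|A :\ j| == 1%N.
  by move: cardA; rewrite (cardsD1 j A) jA => -[]; rewrite add0n => ->.
rewrite Aj big_set1 (sgn_min k) ?mulr1; last by move=> l /set1P->.
have k_gt0 : (0 < k)%N by apply: Agt0; move: (set11 k); rewrite -Aj => /setD1P[].
by rewrite d1Z d1B !d1Z !d1_eb // /binomial_syzygy mulrBr.
Qed.

End Square.
End AperyComplex.

Theorem lemma3p2 (F : fieldType) (S : nat -> bool) (m : nat) (a : nat -> nat)
  (hS : is_numerical_semigroup S) (hm : is_multiplicity S m) (hm2 : (1 < m)%N)
  (ha : is_apery S m a) :
  (forall d : nat, (2 <= d)%N ->
     (forall B : {set 'I_m}, [forall j in B, (0 < val j)%N] -> #|B| = d.+1 ->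
        \sum_(i in B) vscale F m (sgn F m i B) (dform F m a i (B :\ i)) = 0)
     /\
     (forall (i : 'I_m) (A : {set 'I_m}), (0 < val i)%N ->
        [forall j in A, (0 < val j)%N] -> #|A| = d -> below m (val i) A ->
        dform F m a i A = dd F m a d (eb F m i A)))
  /\
  (forall (d : nat) (p q : idx m), (1 < d)%N -> valid m d p -> valid m d.-1 q ->
     dd F m a d (ebasis F m p) q != 0 ->
     (exists k : nat, (0 < k < m)%N /\
        (dd F m a d (ebasis F m p) q = xv F m k \/ dd F m a d (ebasis F m p) q = - xv F m k))
     \/
     (exists k l : nat, [/\ (0 < k < m)%N, (0 < l < m)%N &
        (dd F m a d (ebasis F m p) q = yv F m ^+ bb m a k l
         \/ dd F m a d (ebasis F m p) q = - yv F m ^+ bb m a k l)]))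
  /\
  (forall v : vec F m, inF F m 2 v -> d1 F m a (dd F m a 2 v) = 0)
  /\
  (forall (d : nat) (v : vec F m), (3 <= d)%N -> inF F m d v ->
     dd F m a d.-1 (dd F m a d v) = 0).
Proof.
have m_gt0 : (0 < m)%N := ltnW hm2.
have cocycle := apery_cocycle S m a hS hm ha.
split.
  move=> d _; split=> [B Bpos _ | i A _ Apos <- _]; first exact: sum_sgn_dformn_setD1.
  by rewrite dd_eb.
split.
  move=> d [i A] q _ vp _; rewrite dd_ebasis //.
  case/and4P: vp => /= i_gt0 _ /[dup] Apos /forall_inP Agt0 _.
  move/(dformn_entry _ _ _ m_gt0 _ _ _ i_gt0 Apos).
  have jm (j : 'I_m) : j \in A -> (0 < j < m)%N by move=> /Agt0 ->; exact: ltn_ord.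
  case=> [[j /jm ? ?]|[j /jm ? ?]]; [left; exists j | right; exists i, j] => //.
  by rewrite i_gt0 ltn_ord.
split; first by move=> v _; exact: d1_dd2.
by case=> // d v _ _; exact: dd_comp.
Qed.
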